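(* For every integer $p\ge1$ and every complex $z$ with $e^z\ne1$, $$\sum_{n\ge0}\mathcal{B}_{n,p}\frac{z^n}{n!}=\frac{p\,\exp(e^z-1)}{(e^z-1)^p}\,\gamma\big(p,e^z-1\big).$$
   Context: $\gamma(s,w)=\int_0^w e^{-t}t^{s-1}\,dt$ is the lower incomplete gamma function (for integer $s\ge1$ an entire function of $w$). For an integer $p\ge0$, the $p$-Bell numbers $\mathcal{B}_{n,p}$ are defined by $\sum_{n\ge0}\mathcal{B}_{n,p}\frac{z^n}{n!}=\sum_{n\ge0}\binom{n+p}{p}^{-1}\frac{(e^z-1)^n}{n!}$ (an entire function of $z$ whose Taylor series is the left side). *)

From Stdlib Require Import Reals.
From Coquelicot Require Import Coquelicot.

Definition Cexp (z : C) : C :=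
  (RtoC (exp (Re z)) * (RtoC (cos (Im z)) + Ci * RtoC (sin (Im z))))%C.

(* Lower incomplete gamma function for integer s >= 1, as the integral of
   e^{-t} t^{s-1} along the straight segment from 0 to w (parametrised by
   t = u w, u in [0,1]); for integer s >= 1 the integrand is entire, so the
   integral is path independent. *)
Definition lower_gamma (s : nat) (w : C) : C :=
  (w * RInt (V := C_R_CompleteNormedModule)
         (fun u : R => Cexp (- (RtoC u * w)) * Cpow (RtoC u * w) (s - 1))%C
         0%R 1%R)%C.

Fixpoint stirling2 (n k : nat) : nat :=
  match n, k with
  | O, O => 1
  | O, S _ => 0
  | S _, O => 0
  | S n', S k' => S k' * stirling2 n' (S k') + stirling2 n' k'
  end.

(* p-Bell numbers: the coefficients of z^n/n! in
   sum_k binom(k+p,p)^{-1} (e^z-1)^k/k!; since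
   (e^z-1)^k/k! = sum_n S(n,k) z^n/n!, this is
   B_{n,p} = sum_{k=0}^n S(n,k) / binom(k+p,p). *)
Definition pBell (n p : nat) : R :=
  sum_f_R0 (fun k => INR (stirling2 n k) / Binomial.C (k + p) p) n.

(* Since sum_n S(n,k) z^n/n! = (e^z - 1)^k/k! and B_{n,p} = sum_k S(n,k)/C(k+p,p), exchanging
   the two summations turns the left-hand side into sum_k (e^z - 1)^k/(k! C(k+p,p)); Tannery's
   theorem justifies the exchange, the partial sums of the k-th column being bounded by
   (e^|z| - 1)^k/k!.  As 1/(k! C(k+p,p)) = p!/(k+p)!, with w = e^z - 1 this is the tail
   p!/w^p (e^w - sum_{j<p} w^j/j!) of the exponential series.  On the other side,
   -(p-1)! e^{-t} sum_{j<p} t^j/j! is a primitive of e^{-t} t^{p-1}, so that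
   gamma(p,w) = (p-1)! (1 - e^{-w} sum_{j<p} w^j/j!) and the right-hand side is the same
   expression. *)

From Stdlib Require Import Reals Factorial Lra Lia.
From Coquelicot Require Import Coquelicot.

(** * Stirling numbers of the second kind *)

Lemma stirling2_eq0 n k : (n < k)%nat -> stirling2 n k = 0%nat.
Proof.
  revert k; induction n as [|n IH]; intros [|k] Hk; try lia; simpl; try reflexivity.
  rewrite !IH by lia; lia.
Qed.

(* Inclusion-exclusion count of the surjections from an [n]-set onto a [k]-set. *)
Definition surjections (n k : nat) : R :=
  sum_f_R0 (fun j => (-1) ^ (k - j) * Binomial.C k j * INR j ^ n) k.

Lemma Binomial_C_succ_mul j m :
  (j <= m)%nat -> Binomial.C (S m) j * INR (S m - j) = INR (S m) * Binomial.C m j.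
Proof.
  intros Hj; unfold Binomial.C.
  replace (S m - j)%nat with (S (m - j)) by lia.
  change (fact (S m)) with (S m * fact m)%nat.
  change (fact (S (m - j))) with (S (m - j) * fact (m - j))%nat.
  rewrite !mult_INR; field.
  repeat split; try apply INR_fact_neq_0; apply not_0_INR; lia.
Qed.

Lemma surjections_0_l k : surjections 0 k = 0 ^ k.
Proof.
  unfold surjections; replace (0 ^ k) with ((1 + -1) ^ k) by (f_equal; ring).
  rewrite binomial; apply sum_eq; intros j _; simpl; rewrite pow1; ring.
Qed.

Lemma surjections_S_0 n : surjections (S n) 0 = 0.
Proof. unfold surjections; simpl; ring. Qed.

Lemma surjections_S_S n k :
  surjections (S n) (S k) = INR (S k) * (surjections n (S k) + surjections n k).
Proof.
  unfold surjections.
  set (t := fun j => (-1) ^ (S k - j) * Binomial.C (S k) j * INR j ^ n).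
  (* split the factor [j] of [j ^ (n + 1)] as [(k + 1) - (k + 1 - j)] *)
  rewrite (sum_eq _ (fun j => t j * INR (S k) - t j * INR (S k - j)))
    by (intros j Hj; unfold t; rewrite minus_INR by lia; simpl; ring).
  rewrite minus_sum, <- scal_sum, (tech5 (fun j => t j * INR (S k - j))).
  replace (t (S k) * INR (S k - S k)) with 0 by (rewrite Nat.sub_diag; simpl; ring).
  rewrite (sum_eq (fun j => t j * INR (S k - j))
             (fun j => (-1) ^ (k - j) * Binomial.C k j * INR j ^ n * - INR (S k)) k).
  - rewrite <- scal_sum; ring.
  - intros j Hj; unfold t.
    replace (S k - j)%nat with (S (k - j)) at 1 by lia.
    transitivity (- (-1) ^ (k - j) * (Binomial.C (S k) j * INR (S k - j)) * INR j ^ n);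
      [simpl; ring|].
    rewrite Binomial_C_succ_mul by lia; ring.
Qed.

Lemma surjections_stirling2 n k : surjections n k = INR (fact k) * INR (stirling2 n k).
Proof.
  revert k; induction n as [|n IH]; intros k.
  - rewrite surjections_0_l; destruct k; simpl; ring.
  - destruct k as [|k].
    + rewrite surjections_S_0; simpl; ring.
    + rewrite surjections_S_S, !IH.
      change (stirling2 (S n) (S k)) with (S k * stirling2 n (S k) + stirling2 n k)%nat.
      change (fact (S k)) with (S k * fact k)%nat.
      rewrite plus_INR, !mult_INR; ring.
Qed.

Lemma pBell_eq_sum_n n p N :
  (n <= N)%nat -> pBell n p = sum_n (fun k => INR (stirling2 n k) / Binomial.C (k + p) p) N.
Proof.
  intros HnN; induction HnN as [|N HnN IH].
  - unfold pBell; rewrite sum_n_Reals; reflexivity.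
  - rewrite sum_Sn, <- IH, stirling2_eq0 by lia.
    unfold Rdiv; rewrite Rmult_0_l; symmetry; apply Rplus_0_r.
Qed.

Lemma fact_mul_le_fact_add k p : (fact k * fact p <= fact (k + p))%nat.
Proof.
  induction k as [|k IH]; simpl; [lia|].
  change (fact p + k * fact p)%nat with (fact p * S k)%nat; nia.
Qed.

Lemma Binomial_C_add_ge1 k p : 1 <= Binomial.C (k + p) p.
Proof.
  unfold Binomial.C; replace (k + p - p)%nat with k by lia.
  pose proof (le_INR _ _ (fact_mul_le_fact_add k p)) as H; rewrite mult_INR in H.
  pose proof (INR_fact_lt_0 k); pose proof (INR_fact_lt_0 p).
  apply Rmult_le_reg_r with (INR (fact p) * INR (fact k)); [nra|].
  field_simplify; lra.
Qed.

Lemma Rinv_Binomial_C_add_bounds k p : 0 <= / Binomial.C (k + p) p <= 1.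
Proof.
  pose proof (Binomial_C_add_ge1 k p); split.
  - apply Rlt_le, Rinv_0_lt_compat; lra.
  - rewrite <- Rinv_1; apply Rinv_le_contravar; lra.
Qed.

Lemma sum_n_le_is_series (a : nat -> R) (l : R) N :
  (forall n, 0 <= a n) -> is_series a l -> sum_n a N <= l.
Proof.
  intros Ha Hl; apply (is_lim_seq_incr_compare (sum_n a) l Hl).
  intros n; rewrite sum_Sn, <- (Rplus_0_r (sum_n a n)) at 1.
  apply Rplus_le_compat_l, Ha.
Qed.

Lemma is_series_exp_R (x : R) : is_series (fun n => x ^ n / INR (fact n)) (exp x).
Proof.
  apply (is_series_ext (fun n => / INR (fact n) * x ^ n)).
  - intros n; unfold Rdiv; apply Rmult_comm.
  - apply is_pseries_R, is_exp_Reals.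
Qed.

Lemma Ci_pow_even n : (Ci ^ (2 * n) = RtoC ((-1) ^ n))%C.
Proof.
  rewrite Cpow_mult_r, RtoC_pow; f_equal.
  unfold Ci, Cpow, Cmult, RtoC; simpl; f_equal; ring.
Qed.

Lemma Ci_pow_odd n : (Ci ^ (2 * n + 1) = RtoC ((-1) ^ n) * Ci)%C.
Proof. rewrite Cpow_add_r, Ci_pow_even, Cpow_1_r; reflexivity. Qed.

Lemma is_pseries_zero (x : R) : is_pseries (fun _ => 0) x 0.
Proof.
  apply is_pseries_R, is_series_Reals; intros eps Heps; exists O; intros n _.
  rewrite (sum_eq _ (fun _ => 0)) by (intros; apply Rmult_0_l).
  unfold R_dist; rewrite sum_cte, Rmult_0_l, Rminus_0_r, Rabs_R0; exact Heps.
Qed.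

Lemma is_pseries_cos (b : R) : is_pseries (fun n => Re (Ci ^ n) / INR (fact n)) b (cos b).
Proof.
  replace (cos b) with (cos b + b * 0) by ring.
  apply is_pseries_odd_even.
  - apply is_pseries_ext with cos_n.
    { intros n; unfold cos_n; rewrite Ci_pow_even; reflexivity. }
    unfold cos; destruct (exist_cos (Rsqr b)) as [l Hl].
    apply is_pseries_R, is_series_Reals; rewrite <- Rsqr_pow2; exact Hl.
  - apply is_pseries_ext with (fun _ => 0); [|apply is_pseries_zero].
    intros n; rewrite Ci_pow_odd; simpl; unfold Rdiv; ring.
Qed.

Lemma is_pseries_sin (b : R) : is_pseries (fun n => Im (Ci ^ n) / INR (fact n)) b (sin b).
Proof.
  unfold sin; destruct (exist_sin (Rsqr b)) as [l Hl].
  replace (b * l) with (0 + b * l) by ring.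
  apply is_pseries_odd_even.
  - apply is_pseries_ext with (fun _ => 0); [|apply is_pseries_zero].
    intros n; rewrite Ci_pow_even; simpl; unfold Rdiv; ring.
  - apply is_pseries_ext with sin_n.
    { intros n; unfold sin_n; rewrite Ci_pow_odd; simpl; unfold Rdiv; ring. }
    apply is_pseries_R, is_series_Reals; rewrite <- Rsqr_pow2; exact Hl.
Qed.

Section NormedModuleSums.

Context {K : AbsRing} {V : NormedModule K}.

Lemma filterlim_sum_n {T : Type} {F : (T -> Prop) -> Prop} {FF : Filter F}
    (f : T -> nat -> V) (a : nat -> V) (n : nat) :
  (forall k, filterlim (fun t => f t k) F (locally (a k))) ->
  filterlim (fun t => sum_n (f t) n) F (locally (sum_n a n)).
Proof.
  intros Hf; induction n as [|n IH].
  - rewrite sum_O; apply (filterlim_ext (fun t => f t O)); [intros t; rewrite sum_O; reflexivity|].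
    apply Hf.
  - rewrite sum_Sn; apply (filterlim_ext (fun t => plus (sum_n (f t) n) (f t (S n))));
      [intros t; rewrite sum_Sn; reflexivity|].
    exact (filterlim_comp_2 _ _ _ IH (Hf (S n)) (filterlim_plus _ _)).
Qed.

Lemma is_series_sum_n (f : nat -> nat -> V) (l : nat -> V) m :
  (forall j, (j <= m)%nat -> is_series (f j) (l j)) ->
  is_series (fun n => sum_n (fun j => f j n) m) (sum_n l m).
Proof.
  induction m as [|m IH]; intros Hf.
  - rewrite sum_O; apply (is_series_ext (f O)); [intros n; rewrite sum_O; reflexivity|].
    apply Hf; lia.
  - rewrite sum_Sn; apply (is_series_ext (fun n => plus (sum_n (fun j => f j n) m) (f (S m) n))).
    + intros n; rewrite sum_Sn; reflexivity.
    + apply is_series_plus; [apply IH; intros j Hj|]; apply Hf; lia.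
Qed.

Lemma tannery (f : nat -> nat -> V) (a : nat -> V) (M : nat -> R) (l : V) :
  (forall k, filterlim (fun N => f N k) eventually (locally (a k))) ->
  (forall N k, norm (f N k) <= M k) -> ex_series M -> is_series a l ->
  filterlim (fun N => sum_n (f N) N) eventually (locally l).
Proof.
  intros Hf HM Hser Ha; apply filterlim_locally_ball_norm; intros eps.
  set (e := pos_div_2 (pos_div_2 eps)).
  destruct (Cauchy_ex_series (V := R_CompleteNormedModule) M Hser e) as [K0 HK0].
  destruct (proj1 (filterlim_locally_ball_norm _ _) Ha e) as [K1 HK1].
  set (k := max K0 K1).
  destruct (proj1 (filterlim_locally_ball_norm _ _) (filterlim_sum_n f a k Hf) e) as [N1 HN1].
  exists (max N1 (S k)); intros N HN; unfold ball_norm.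
  assert (Htail : norm (sum_n_m (f N) (S k) N) < e).
  { eapply Rle_lt_trans; [apply norm_sum_n_m|].
    eapply Rle_lt_trans; [apply sum_n_m_le, HM|].
    eapply Rle_lt_trans; [apply Rle_abs|apply (HK0 (S k) N); lia]. }
  rewrite (minus_trans (sum_n (f N) k)), (minus_trans (sum_n a k) (sum_n (f N) k)).
  replace (minus (sum_n (f N) N) (sum_n (f N) k)) with (sum_n_m (f N) (S k) N)
    by (apply (sum_n_m_sum_n (G := NormedModule.AbelianGroup K V)); lia).
  eapply Rle_lt_trans; [apply norm_triangle|].
  eapply Rle_lt_trans; [apply Rplus_le_compat_l, norm_triangle|].
  pose proof (HN1 N ltac:(lia)) as H1; pose proof (HK1 k ltac:(lia)) as H2.
  unfold ball_norm in H1, H2; change (pos e) with (eps / 2 / 2) in *.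
  pose proof (cond_pos eps); lra.
Qed.

End NormedModuleSums.

Open Scope C_scope.

Lemma sum_Sn_C (a : nat -> C) n : sum_n a (S n) = sum_n a n + a (S n).
Proof. exact (sum_Sn a n). Qed.

Lemma sum_n_shift_C (a : nat -> C) n : sum_n a (S n) = a O + sum_n (fun k => a (S k)) n.
Proof. unfold sum_n; rewrite sum_Sn_m, sum_n_m_S by lia; reflexivity. Qed.

Lemma sum_n_ext_loc_C (a b : nat -> C) n :
  (forall k, (k <= n)%nat -> a k = b k) -> sum_n a n = sum_n b n.
Proof. exact (sum_n_ext_loc a b n). Qed.

Lemma sum_n_plus_C (u v : nat -> C) n : sum_n (fun k => u k + v k) n = sum_n u n + sum_n v n.
Proof. exact (sum_n_plus u v n). Qed.

Lemma sum_n_mult_l_C (a : C) (u : nat -> C) n : sum_n (fun k => a * u k) n = a * sum_n u n.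
Proof. exact (sum_n_mult_l a u n). Qed.

Lemma sum_n_mult_r_C (a : C) (u : nat -> C) n : sum_n (fun k => u k * a) n = sum_n u n * a.
Proof. exact (sum_n_mult_r a u n). Qed.

Lemma RtoC_sum_n (a : nat -> R) n : RtoC (sum_n a n) = sum_n (fun k => RtoC (a k)) n.
Proof.
  induction n as [|n IH]; [rewrite !sum_O; reflexivity|].
  rewrite !sum_Sn, <- IH; apply RtoC_plus.
Qed.

Lemma Re_sum_n (a : nat -> C) n : Re (sum_n a n) = sum_n (fun k => Re (a k)) n.
Proof.
  induction n as [|n IH]; [rewrite !sum_O; reflexivity|].
  rewrite !sum_Sn, <- IH; reflexivity.
Qed.

Lemma Im_sum_n (a : nat -> C) n : Im (sum_n a n) = sum_n (fun k => Im (a k)) n.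
Proof.
  induction n as [|n IH]; [rewrite !sum_O; reflexivity|].
  rewrite !sum_Sn, <- IH; reflexivity.
Qed.

Lemma RtoC_neq0 (r : R) : r <> 0%R -> RtoC r <> 0.
Proof. intros Hr H; apply Hr, RtoC_inj, H. Qed.

Lemma RtoC_fact_neq0 n : RtoC (INR (fact n)) <> 0.
Proof. apply RtoC_neq0, INR_fact_neq_0. Qed.

Lemma Cpow_add_binomial (x y : C) n :
  (x + y) ^ n = sum_n (fun k => RtoC (Binomial.C n k) * x ^ k * y ^ (n - k)) n.
Proof.
  induction n as [|n IH].
  - rewrite sum_O, C_n_0; simpl; ring.
  - rewrite Cpow_S, IH, sum_n_shift_C, C_n_0, Nat.sub_0_r.
    destruct n as [|n].
    + rewrite !sum_O, !C_n_n; simpl; ring.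
    + set (b := fun k => RtoC (Binomial.C (S n) k) * x ^ k * y ^ (S n - k)).
      assert (pascal_step : forall k, (k <= n)%nat ->
        RtoC (Binomial.C (S (S n)) (S k)) * x ^ S k * y ^ (S (S n) - S k)
        = x * b k + y * b (S k)).
      { intros k Hk; unfold b; rewrite <- pascal, RtoC_plus by lia.
        replace (S (S n) - S k)%nat with (S (n - k)) by lia.
        replace (S n - k)%nat with (S (n - k)) by lia.
        replace (S n - S k)%nat with (n - k)%nat by lia.
        rewrite !Cpow_S; ring. }
      rewrite (sum_Sn_C (fun k => RtoC (Binomial.C (S (S n)) (S k)) * _ * _)).
      rewrite (sum_n_ext_loc_C _ _ n pascal_step), sum_n_plus_C, !sum_n_mult_l_C.
      rewrite Cmult_plus_distr_r, (sum_Sn_C b) at 1; rewrite (sum_n_shift_C b).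
      replace (b O) with (y ^ S n) by (unfold b; rewrite C_n_0, Nat.sub_0_r; simpl; ring).
      replace (b (S n)) with (x ^ S n) by (unfold b; rewrite C_n_n, Nat.sub_diag; simpl; ring).
      rewrite C_n_n, Nat.sub_diag, !(Cpow_S _ (S n)); simpl Cpow; ring.
Qed.

Lemma Cpow_add_div_fact (x y : C) n :
  (x + y) ^ n / RtoC (INR (fact n))
  = sum_n (fun k => x ^ k / RtoC (INR (fact k)) * (y ^ (n - k) / RtoC (INR (fact (n - k))))) n.
Proof.
  rewrite Cpow_add_binomial; unfold Cdiv; rewrite <- sum_n_mult_r_C.
  apply sum_n_ext_loc_C; intros k Hk; unfold Binomial.C.
  rewrite RtoC_div, RtoC_mult by (apply Rmult_integral_contrapositive; split; apply INR_fact_neq_0).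
  field; repeat split; apply RtoC_fact_neq0.
Qed.

Lemma is_series_Cmult_l (c : C) (a : nat -> C) (l : C) :
  is_series a l -> is_series (fun n => c * a n) (c * l).
Proof. exact (is_series_scal c a l). Qed.

Lemma is_series_Re_Im (a : nat -> C) (lr li : R) :
  is_series (fun n => Re (a n)) lr -> is_series (fun n => Im (a n)) li -> is_series a (lr, li).
Proof.
  intros Hr Hi; unfold is_series.
  apply filterlim_ext with (fun N => (sum_n (fun n => Re (a n)) N, sum_n (fun n => Im (a n)) N)).
  { intros N; rewrite <- Re_sum_n, <- Im_sum_n; apply surjective_pairing. }
  apply (filterlim_filter_le_2 (G := filter_prod (locally lr) (locally li)));
    [|apply filterlim_pair; assumption].
  intros P [eps HP]; apply Filter_prod with (ball lr eps) (ball li eps);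
    [apply locally_ball|apply locally_ball|].
  intros x y Hx Hy; apply HP; split; assumption.
Qed.

Lemma is_series_Re (a : nat -> C) (l : C) :
  is_series a l -> is_series (fun n => Re (a n)) (Re l).
Proof.
  unfold is_series; intros H.
  apply filterlim_ext with (fun N => Re (sum_n a N)); [intros N; apply Re_sum_n|].
  eapply filterlim_comp; [exact H|].
  intros P [eps HP]; exists eps; intros y [Hy _]; apply HP, Hy.
Qed.

Lemma is_series_Im (a : nat -> C) (l : C) :
  is_series a l -> is_series (fun n => Im (a n)) (Im l).
Proof.
  unfold is_series; intros H.
  apply filterlim_ext with (fun N => Im (sum_n a N)); [intros N; apply Im_sum_n|].
  eapply filterlim_comp; [exact H|].
  intros P [eps HP]; exists eps; intros y [_ Hy]; apply HP, Hy.
Qed.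

Lemma Rabs_Im_le_Cmod (c : C) : Rabs (Im c) <= Cmod c.
Proof.
  rewrite <- (Rabs_Ropp (Im c)), <- re_mult_Ci, <- (Rmult_1_r (Cmod c)), <- Cmod_Ci, <- Cmod_mult.
  apply re_le_Cmod.
Qed.

Lemma ex_series_Rabs_le_Cmod (e : nat -> C) (proj : C -> R) :
  (forall c, Rabs (proj c) <= Cmod c) -> ex_series (fun n => Cmod (e n)) ->
  ex_series (fun n => Rabs (proj (e n))).
Proof.
  intros Hproj He; apply (ex_series_le (V := R_CompleteNormedModule)) with (fun n => Cmod (e n));
    [|exact He].
  intros n; change norm with Rabs; rewrite Rabs_Rabsolu; apply Hproj.
Qed.

Lemma is_series_Cauchy_RtoC (a : nat -> R) (e : nat -> C) (la : R) (le : C) :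
  is_series a la -> is_series e le ->
  ex_series (fun n => Rabs (a n)) -> ex_series (fun n => Cmod (e n)) ->
  is_series (fun n => sum_n (fun k => RtoC (a k) * e (n - k)%nat) n) (RtoC la * le).
Proof.
  intros Ha He Ha_abs He_abs.
  replace (RtoC la * le) with ((la * Re le)%R, (la * Im le)%R)
    by (unfold RtoC, Cmult, Re, Im; simpl; f_equal; ring).
  apply is_series_Re_Im.
  - assert (Hr : forall n, sum_f_R0 (fun k => a k * Re (e (n - k)%nat))%R n
                           = Re (sum_n (fun k => RtoC (a k) * e (n - k)%nat) n)).
    { intros n; rewrite Re_sum_n, sum_n_Reals; apply sum_eq; intros k _.
      symmetry; apply re_scal_l. }
    exact (is_series_ext _ _ _ Hr (is_series_mult _ _ _ _ Ha (is_series_Re _ _ He) Ha_abs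
             (ex_series_Rabs_le_Cmod _ _ re_le_Cmod He_abs))).
  - assert (Hi : forall n, sum_f_R0 (fun k => a k * Im (e (n - k)%nat))%R n
                           = Im (sum_n (fun k => RtoC (a k) * e (n - k)%nat) n)).
    { intros n; rewrite Im_sum_n, sum_n_Reals; apply sum_eq; intros k _.
      symmetry; apply im_scal_l. }
    exact (is_series_ext _ _ _ Hi (is_series_mult _ _ _ _ Ha (is_series_Im _ _ He) Ha_abs
             (ex_series_Rabs_le_Cmod _ _ Rabs_Im_le_Cmod He_abs))).
Qed.

(** * The complex exponential *)

Lemma Cexp_pair (a b : R) : Cexp (a, b) = ((exp a * cos b)%R, (exp a * sin b)%R).
Proof. unfold Cexp, RtoC, Ci, Cmult, Cplus; simpl; f_equal; ring. Qed.

Lemma Cexp_add (x y : C) : Cexp (x + y) = Cexp x * Cexp y.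
Proof.
  destruct x as [a b], y as [c d]; change ((a, b) + (c, d)) with ((a + c)%R, (b + d)%R).
  rewrite !Cexp_pair, exp_plus, cos_plus, sin_plus; unfold Cmult; simpl; f_equal; ring.
Qed.

Lemma Cexp_0 : Cexp 0 = 1.
Proof.
  change (RtoC 0) with (0%R, 0%R); rewrite Cexp_pair, exp_0, cos_0, sin_0.
  unfold RtoC; f_equal; ring.
Qed.

Lemma Cexp_RtoC (x : R) : Cexp (RtoC x) = RtoC (exp x).
Proof.
  change (RtoC x) with (x, 0%R); rewrite Cexp_pair, cos_0, sin_0.
  unfold RtoC; f_equal; ring.
Qed.

Lemma Cexp_opp_r (x : C) : Cexp x * Cexp (- x) = 1.
Proof. rewrite <- Cexp_add, Cplus_opp_r; exact Cexp_0. Qed.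

Lemma Cexp_INR_mul (j : nat) (z : C) : Cexp (RtoC (INR j) * z) = Cexp z ^ j.
Proof.
  induction j as [|j IH].
  - simpl; rewrite Cmult_0_l; exact Cexp_0.
  - rewrite S_INR, RtoC_plus, Cmult_plus_distr_r, Cmult_1_l, Cexp_add, IH, Cpow_S.
    apply Cmult_comm.
Qed.

Lemma RtoC_pow_div_fact (x : R) n :
  RtoC x ^ n / RtoC (INR (fact n)) = RtoC (x ^ n / INR (fact n)).
Proof. rewrite RtoC_div, RtoC_pow by apply INR_fact_neq_0; reflexivity. Qed.

Lemma Cmod_pow_div_fact (z : C) n :
  Cmod (z ^ n / RtoC (INR (fact n))) = (Cmod z ^ n / INR (fact n))%R.
Proof.
  rewrite Cmod_div, Cmod_pow, Cmod_R, Rabs_pos_eq by (apply RtoC_fact_neq0 || apply pos_INR).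
  reflexivity.
Qed.

Lemma ex_series_Cmod_pow_div_fact (z : C) :
  ex_series (fun n => Cmod (z ^ n / RtoC (INR (fact n)))).
Proof.
  exists (exp (Cmod z)); apply (is_series_ext _ _ _ (fun n => eq_sym (Cmod_pow_div_fact z n))).
  apply is_series_exp_R.
Qed.

Lemma is_series_exp_imag (b : R) :
  is_series (fun n => (RtoC b * Ci) ^ n / RtoC (INR (fact n))) (cos b, sin b).
Proof.
  assert (Hterm : forall n, (RtoC b * Ci) ^ n / RtoC (INR (fact n))
                            = RtoC (b ^ n / INR (fact n))%R * Ci ^ n).
  { intros n; rewrite Cpow_mult_l, <- RtoC_pow_div_fact; unfold Cdiv; ring. }
  apply is_series_Re_Im.
  - assert (Hc : forall n, (Re (Ci ^ n) / INR (fact n) * b ^ n)%R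
                           = Re ((RtoC b * Ci) ^ n / RtoC (INR (fact n)))).
    { intros n; rewrite Hterm, re_scal_l; unfold Rdiv; ring. }
    exact (is_series_ext _ _ _ Hc (proj1 (is_pseries_R _ _ _) (is_pseries_cos b))).
  - assert (Hs : forall n, (Im (Ci ^ n) / INR (fact n) * b ^ n)%R
                           = Im ((RtoC b * Ci) ^ n / RtoC (INR (fact n)))).
    { intros n; rewrite Hterm, im_scal_l; unfold Rdiv; ring. }
    exact (is_series_ext _ _ _ Hs (proj1 (is_pseries_R _ _ _) (is_pseries_sin b))).
Qed.

Lemma is_series_Cexp (z : C) : is_series (fun n => z ^ n / RtoC (INR (fact n))) (Cexp z).
Proof.
  destruct z as [a b].
  replace (Cexp (a, b)) with (RtoC (exp a) * (cos b, sin b))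
    by (rewrite Cexp_pair; unfold RtoC, Cmult; simpl; f_equal; ring).
  assert (Hterm : forall n,
    sum_n (fun k => RtoC (a ^ k / INR (fact k))
                    * ((RtoC b * Ci) ^ (n - k) / RtoC (INR (fact (n - k))))) n
    = (a, b) ^ n / RtoC (INR (fact n))).
  { intros n; replace (a, b) with (RtoC a + RtoC b * Ci)
      by (unfold RtoC, Ci, Cplus, Cmult; simpl; f_equal; ring).
    rewrite Cpow_add_div_fact; apply sum_n_ext_loc_C; intros k _.
    rewrite RtoC_pow_div_fact; reflexivity. }
  apply (is_series_ext _ _ _ Hterm).
  apply (is_series_Cauchy_RtoC (fun n => a ^ n / INR (fact n))%R
           (fun n => (RtoC b * Ci) ^ n / RtoC (INR (fact n))));
    [apply is_series_exp_R|apply is_series_exp_imag| |apply ex_series_Cmod_pow_div_fact].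
  assert (Habs : forall n, Cmod (RtoC a ^ n / RtoC (INR (fact n))) = Rabs (a ^ n / INR (fact n))).
  { intros n; rewrite RtoC_pow_div_fact, Cmod_R; reflexivity. }
  exact (ex_series_ext _ _ Habs (ex_series_Cmod_pow_div_fact (RtoC a))).
Qed.

(** * The exponential generating function of the Stirling numbers *)

Lemma is_series_stirling2 (z : C) k :
  is_series (fun n => RtoC (INR (stirling2 n k)) * z ^ n / RtoC (INR (fact n)))
            ((Cexp z - 1) ^ k / RtoC (INR (fact k))).
Proof.
  set (c j := RtoC (Binomial.C k j) * (- 1) ^ (k - j)).
  assert (Hj : forall j, (j <= k)%nat -> is_series
             (fun n => c j * ((RtoC (INR j) * z) ^ n / RtoC (INR (fact n)))) (c j * Cexp z ^ j)).
  { intros j _; rewrite <- Cexp_INR_mul; apply is_series_Cmult_l, is_series_Cexp. }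
  pose proof (is_series_Cmult_l (/ RtoC (INR (fact k))) _ _ (is_series_sum_n _ _ _ Hj)) as H.
  assert (Hlim : (Cexp z - 1) ^ k / RtoC (INR (fact k))
                 = / RtoC (INR (fact k)) * sum_n (fun j => c j * Cexp z ^ j) k).
  { replace (Cexp z - 1) with (Cexp z + RtoC (-1))
      by (unfold Cminus, Copp, Cplus, RtoC; simpl; f_equal; ring).
    rewrite Cpow_add_binomial; unfold Cdiv; rewrite Cmult_comm; f_equal.
    apply sum_n_ext_loc_C; intros j _; unfold c; ring. }
  assert (Hterm : forall n,
    / RtoC (INR (fact k)) * sum_n (fun j => c j * ((RtoC (INR j) * z) ^ n / RtoC (INR (fact n)))) k
    = RtoC (INR (stirling2 n k)) * z ^ n / RtoC (INR (fact n))).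
  { intros n.
    transitivity (/ RtoC (INR (fact k)) * (RtoC (surjections n k) * z ^ n / RtoC (INR (fact n)))).
    - f_equal; unfold surjections; rewrite <- sum_n_Reals, RtoC_sum_n.
      unfold Cdiv; rewrite <- !sum_n_mult_r_C; apply sum_n_ext_loc_C; intros j _; unfold c.
      rewrite Cpow_mult_l, !RtoC_mult, <- !RtoC_pow; ring.
    - rewrite surjections_stirling2, RtoC_mult; field; split; apply RtoC_fact_neq0. }
  rewrite Hlim; exact (is_series_ext _ _ _ Hterm H).
Qed.

Lemma is_series_stirling2_R (x : R) k :
  is_series (fun n => INR (stirling2 n k) * x ^ n / INR (fact n))%R
            ((exp x - 1) ^ k / INR (fact k))%R.
Proof.
  pose proof (is_series_Re _ _ (is_series_stirling2 (RtoC x) k)) as H.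
  replace ((Cexp (RtoC x) - 1) ^ k / RtoC (INR (fact k)))
    with (RtoC ((exp x - 1) ^ k / INR (fact k))) in H
    by (rewrite RtoC_div, RtoC_pow, RtoC_minus, Cexp_RtoC by apply INR_fact_neq_0; reflexivity).
  assert (Hterm : forall n, Re (RtoC (INR (stirling2 n k)) * RtoC x ^ n / RtoC (INR (fact n)))
                            = (INR (stirling2 n k) * x ^ n / INR (fact n))%R).
  { intros n; rewrite <- RtoC_pow, <- RtoC_mult, <- RtoC_div by apply INR_fact_neq_0.
    reflexivity. }
  exact (is_series_ext _ _ _ Hterm H).
Qed.

Lemma Cmod_stirling2_partial_sum_le (z : C) k N :
  Rle (Cmod (sum_n (fun n => RtoC (INR (stirling2 n k)) * z ^ n / RtoC (INR (fact n))) N))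
      ((exp (Cmod z) - 1) ^ k / INR (fact k)).
Proof.
  apply Rle_trans with (sum_n (fun n => INR (stirling2 n k) * Cmod z ^ n / INR (fact n))%R N).
  - eapply Rle_trans; [apply (norm_sum_n_m (V := C_NormedModule))|].
    right; apply sum_n_m_ext; intros n; change norm with Cmod; unfold Cdiv.
    rewrite !Cmod_mult, Cmod_inv, Cmod_pow, !Cmod_R, !Rabs_pos_eq
      by (apply pos_INR || apply RtoC_fact_neq0).
    reflexivity.
  - apply sum_n_le_is_series; [|apply is_series_stirling2_R].
    intros n; apply Rmult_le_pos; [apply Rmult_le_pos; [apply pos_INR|apply pow_le, Cmod_ge_0]|].
    apply Rlt_le, Rinv_0_lt_compat, INR_fact_lt_0.
Qed.

Lemma Cmod_weighted_stirling2_partial_sum_le (z : C) k p N :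
  Rle (Cmod (sum_n (fun n => RtoC (/ Binomial.C (k + p) p)
                             * (RtoC (INR (stirling2 n k)) * z ^ n / RtoC (INR (fact n)))) N))
      ((exp (Cmod z) - 1) ^ k / INR (fact k)).
Proof.
  rewrite sum_n_mult_l_C, Cmod_mult, Cmod_R.
  destruct (Rinv_Binomial_C_add_bounds k p) as [H0 H1]; rewrite Rabs_pos_eq by exact H0.
  pose proof (Cmod_stirling2_partial_sum_le z k N) as Hle.
  pose proof (Cmod_ge_0 (sum_n (fun n => RtoC (INR (stirling2 n k)) * z ^ n
                                         / RtoC (INR (fact n))) N)).
  nra.
Qed.

Lemma sum_n_pBell_switch (z : C) p N :
  sum_n (fun n => RtoC (pBell n p) * z ^ n / RtoC (INR (fact n))) N
  = sum_n (fun k => sum_n (fun n => RtoC (/ Binomial.C (k + p) p)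
             * (RtoC (INR (stirling2 n k)) * z ^ n / RtoC (INR (fact n)))) N) N.
Proof.
  rewrite <- sum_n_switch; apply sum_n_ext_loc_C; intros n Hn.
  rewrite (pBell_eq_sum_n _ _ _ Hn), RtoC_sum_n; unfold Cdiv.
  rewrite <- !sum_n_mult_r_C; apply sum_n_ext_loc_C; intros k _.
  unfold Rdiv; rewrite RtoC_mult; ring.
Qed.

(** * The lower incomplete gamma function *)

Lemma is_derive_C_pair (f g : R -> R) (x f' g' : R) :
  is_derive f x f' -> is_derive g x g' -> is_derive (fun u => (f u, g u) : C) x (f', g').
Proof.
  intros Hf Hg.
  pose proof (is_derive_scal_l (V := C_R_NormedModule) f x f' (1%R, 0%R) Hf) as H1.
  pose proof (is_derive_scal_l (V := C_R_NormedModule) g x g' (0%R, 1%R) Hg) as H2.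
  eapply is_derive_ext; [|eapply filterdiff_ext_lin; [exact (is_derive_plus _ _ x _ _ H1 H2)|]];
    intros u; simpl; unfold scal, plus; simpl; unfold prod_scal, prod_plus; simpl;
    unfold scal, plus, mult; simpl; change (@mult (AbsRing.Ring R_AbsRing)) with Rmult;
    f_equal; ring.
Qed.

Lemma is_derive_Re (F : R -> C) (x : R) (l : C) :
  is_derive F x l -> is_derive (fun u => Re (F u)) x (Re l).
Proof.
  intros H; eapply filterdiff_ext_lin;
    [exact (filterdiff_comp _ _ _ _ H (filterdiff_linear _ is_linear_fst))|reflexivity].
Qed.

Lemma is_derive_Im (F : R -> C) (x : R) (l : C) :
  is_derive F x l -> is_derive (fun u => Im (F u)) x (Im l).
Proof.
  intros H; eapply filterdiff_ext_lin;
    [exact (filterdiff_comp _ _ _ _ H (filterdiff_linear _ is_linear_snd))|reflexivity].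
Qed.

Lemma is_derive_ext_C (f g : R -> C) (x : R) (l : C) :
  (forall u, f u = g u) -> is_derive f x l -> is_derive g x l.
Proof. exact (is_derive_ext (V := C_R_NormedModule) f g x l). Qed.

Lemma is_derive_C_const (c : C) (x : R) : is_derive (fun _ : R => c) x (RtoC 0).
Proof. exact (is_derive_const (V := C_R_NormedModule) c x). Qed.

Lemma is_derive_Cmult (F G : R -> C) (x : R) (F' G' : C) :
  is_derive F x F' -> is_derive G x G' -> is_derive (fun u => F u * G u) x (F' * G x + F x * G').
Proof.
  intros HF HG.
  pose proof (is_derive_Re _ _ _ HF) as F1; pose proof (is_derive_Im _ _ _ HF) as F2.
  pose proof (is_derive_Re _ _ _ HG) as G1; pose proof (is_derive_Im _ _ _ HG) as G2.
  pose proof (fun f g f' g' Hf Hg => is_derive_mult f g x f' g' Hf Hg Rmult_comm) as Hmult.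
  pose proof (is_derive_C_pair _ _ _ _ _
    (is_derive_minus _ _ _ _ _ (Hmult _ _ _ _ F1 G1) (Hmult _ _ _ _ F2 G2))
    (is_derive_plus _ _ _ _ _ (Hmult _ _ _ _ F1 G2) (Hmult _ _ _ _ F2 G1))) as H.
  replace (F' * G x + F x * G') with
    (minus (plus (mult (Re F') (Re (G x))) (mult (Re (F x)) (Re G')))
           (plus (mult (Im F') (Im (G x))) (mult (Im (F x)) (Im G'))),
     plus (plus (mult (Re F') (Im (G x))) (mult (Re (F x)) (Im G')))
          (plus (mult (Im F') (Re (G x))) (mult (Im (F x)) (Re G')))).
  - eapply is_derive_ext; [|exact H]; reflexivity.
  - unfold minus, plus, opp, mult; simpl; change (@mult (AbsRing.Ring R_AbsRing)) with Rmult.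
    unfold Cmult, Cplus, Re, Im; simpl; f_equal; ring.
Qed.

Lemma is_derive_Cmult_l (c : C) (F : R -> C) (x : R) (F' : C) :
  is_derive F x F' -> is_derive (fun u => c * F u) x (c * F').
Proof.
  intros HF; replace (c * F') with (0 * F x + c * F') by ring.
  exact (is_derive_Cmult _ _ x _ _ (is_derive_C_const c x) HF).
Qed.

Lemma is_derive_RtoC_mul (c : C) (x : R) : is_derive (fun u => RtoC u * c) x c.
Proof.
  destruct c as [a b].
  eapply is_derive_ext;
    [|apply (is_derive_C_pair (fun u => u * a)%R (fun u => u * b)%R); auto_derive; auto; ring].
  intros u; unfold RtoC, Cmult; simpl; f_equal; ring.
Qed.

Lemma is_derive_Cexp_RtoC_mul (c : C) (x : R) :
  is_derive (fun u => Cexp (RtoC u * c)) x (c * Cexp (RtoC x * c)).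
Proof.
  destruct c as [a b].
  assert (Hc : forall u : R, RtoC u * (a, b) = ((u * a)%R, (u * b)%R))
    by (intros u; unfold RtoC, Cmult; simpl; f_equal; ring).
  apply (is_derive_ext (fun u => ((exp (u * a) * cos (u * b))%R, (exp (u * a) * sin (u * b))%R)));
    [intros u; rewrite Hc, Cexp_pair; reflexivity|].
  rewrite Hc, Cexp_pair.
  replace ((a, b) * ((exp (x * a) * cos (x * b))%R, (exp (x * a) * sin (x * b))%R))
    with ((a * exp (x * a) * cos (x * b) - b * exp (x * a) * sin (x * b))%R,
          (a * exp (x * a) * sin (x * b) + b * exp (x * a) * cos (x * b))%R)
    by (unfold Cmult; simpl; f_equal; ring).
  apply is_derive_C_pair; auto_derive; auto; ring.
Qed.

Lemma is_derive_Cpow_RtoC_mul (c : C) (n : nat) (x : R) :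
  is_derive (fun u => (RtoC u * c) ^ n) x (RtoC (INR n) * c * (RtoC x * c) ^ pred n).
Proof.
  induction n as [|n IH].
  - replace (RtoC (INR 0) * c * (RtoC x * c) ^ pred 0) with (RtoC 0) by (simpl; ring).
    apply (is_derive_ext_C (fun _ => 1)); [reflexivity|apply is_derive_C_const].
  - apply (is_derive_ext_C (fun u => (RtoC u * c) * (RtoC u * c) ^ n));
      [intros u; symmetry; apply Cpow_S|].
    replace (RtoC (INR (S n)) * c * (RtoC x * c) ^ pred (S n))
      with (c * (RtoC x * c) ^ n + RtoC x * c * (RtoC (INR n) * c * (RtoC x * c) ^ pred n)).
    + exact (is_derive_Cmult _ _ x _ _ (is_derive_RtoC_mul c x) IH).
    + rewrite S_INR, RtoC_plus; destruct n as [|n]; simpl pred; [simpl; ring|].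
      rewrite Cpow_S; ring.
Qed.

Definition exp_partial (w : C) (m : nat) : C := sum_n (fun j => w ^ j / RtoC (INR (fact j))) m.

Lemma exp_partial_S (w : C) m :
  exp_partial w (S m) = exp_partial w m + w ^ S m / RtoC (INR (fact (S m))).
Proof. exact (sum_Sn _ m). Qed.

Lemma exp_partial_0 m : exp_partial 0 m = 1.
Proof.
  induction m as [|m IH].
  - unfold exp_partial; rewrite sum_O; simpl; field.
  - rewrite exp_partial_S, IH, Cpow_S, Cmult_0_l; unfold Cdiv; ring.
Qed.

Lemma is_derive_exp_partial (w : C) (m : nat) (x : R) :
  is_derive (fun u => exp_partial (RtoC u * w) m) x
    (w * (exp_partial (RtoC x * w) m - (RtoC x * w) ^ m / RtoC (INR (fact m)))).
Proof.
  induction m as [|m IH].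
  - replace (w * _) with (RtoC 0)
      by (unfold exp_partial; rewrite sum_O; simpl; field; apply RtoC_fact_neq0).
    apply (is_derive_ext_C (fun _ => 1));
      [intros u; unfold exp_partial; rewrite sum_O; simpl; field|apply is_derive_C_const].
  - apply (is_derive_ext_C (fun u => exp_partial (RtoC u * w) m
                                   + / RtoC (INR (fact (S m))) * (RtoC u * w) ^ S m));
      [intros u; rewrite exp_partial_S; unfold Cdiv; ring|].
    replace (w * _) with (w * (exp_partial (RtoC x * w) m - (RtoC x * w) ^ m / RtoC (INR (fact m)))
               + / RtoC (INR (fact (S m))) * (RtoC (INR (S m)) * w * (RtoC x * w) ^ m)).
    + exact (is_derive_plus _ _ _ _ _ IH
               (is_derive_Cmult_l _ _ _ _ (is_derive_Cpow_RtoC_mul w (S m) x))).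
    + rewrite exp_partial_S, Cpow_S; change (fact (S m)) with (S m * fact m)%nat.
      rewrite mult_INR, RtoC_mult; field.
      split; [apply RtoC_fact_neq0|apply RtoC_neq0, not_0_INR; lia].
Qed.

Lemma is_derive_lower_gamma_primitive (w : C) (m : nat) (x : R) : w <> 0 ->
  is_derive
    (fun u => - RtoC (INR (fact m)) / w * (Cexp (RtoC u * - w) * exp_partial (RtoC u * w) m))
    x (Cexp (- (RtoC x * w)) * (RtoC x * w) ^ (S m - 1)).
Proof.
  intros Hw.
  replace (Cexp (- (RtoC x * w)) * (RtoC x * w) ^ (S m - 1))
    with (- RtoC (INR (fact m)) / w *
            (- w * Cexp (RtoC x * - w) * exp_partial (RtoC x * w) m
             + Cexp (RtoC x * - w) * (w * (exp_partial (RtoC x * w) m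
                                           - (RtoC x * w) ^ m / RtoC (INR (fact m)))))).
  - apply is_derive_Cmult_l, is_derive_Cmult;
      [apply is_derive_Cexp_RtoC_mul|apply is_derive_exp_partial].
  - replace (S m - 1)%nat with m by lia; replace (- (RtoC x * w)) with (RtoC x * - w) by ring.
    field; split; [apply RtoC_fact_neq0|exact Hw].
Qed.

Lemma continuous_lower_gamma_integrand (w : C) (s : nat) (x : R) :
  continuous (fun u : R => Cexp (- (RtoC u * w)) * (RtoC u * w) ^ s) x.
Proof.
  apply (ex_derive_continuous (V := C_R_NormedModule)); eexists.
  apply (is_derive_ext_C (fun u => Cexp (RtoC u * - w) * (RtoC u * w) ^ s));
    [intros u; do 2 f_equal; ring|].
  apply is_derive_Cmult; [apply is_derive_Cexp_RtoC_mul|apply is_derive_Cpow_RtoC_mul].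
Qed.

Lemma lower_gamma_closed_form (w : C) (m : nat) :
  w <> 0 -> lower_gamma (S m) w = RtoC (INR (fact m)) * (1 - Cexp (- w) * exp_partial w m).
Proof.
  intros Hw.
  set (G u := - RtoC (INR (fact m)) / w * (Cexp (RtoC u * - w) * exp_partial (RtoC u * w) m)).
  unfold lower_gamma.
  rewrite (is_RInt_unique _ _ _ _ (is_RInt_derive (V := C_R_CompleteNormedModule) G _ 0 1
             (fun u _ => is_derive_lower_gamma_primitive w m u Hw)
             (fun u _ => continuous_lower_gamma_integrand w (S m - 1) u))).
  change (minus (G 1%R) (G 0%R)) with (G 1%R - G 0%R); unfold G.
  replace (RtoC 0 * - w) with (RtoC 0) by ring; replace (RtoC 0 * w) with (RtoC 0) by ring.
  replace (RtoC 1 * - w) with (- w) by ring; replace (RtoC 1 * w) with w by ring.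
  rewrite Cexp_0, exp_partial_0; field; exact Hw.
Qed.

Lemma is_series_exp_tail (w : C) m : w <> 0 ->
  is_series (fun k => RtoC (/ Binomial.C (k + S m) (S m)) * (w ^ k / RtoC (INR (fact k))))
            (RtoC (INR (fact (S m))) / w ^ S m * (Cexp w - exp_partial w m)).
Proof.
  intros Hw.
  assert (Htail : is_series (fun k => w ^ (S m + k) / RtoC (INR (fact (S m + k))))
                            (Cexp w - exp_partial w m)).
  { pose proof (is_series_Cexp w) as H.
    replace (Cexp w) with ((Cexp w - exp_partial w m) + exp_partial w m) in H by ring.
    exact (is_series_incr_n _ (S m) _ (Nat.lt_0_succ m) H). }
  assert (Hterm : forall k,
    RtoC (INR (fact (S m))) / w ^ S m * (w ^ (S m + k) / RtoC (INR (fact (S m + k))))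
    = RtoC (/ Binomial.C (k + S m) (S m)) * (w ^ k / RtoC (INR (fact k)))).
  { intros k; unfold Binomial.C.
    replace (k + S m - S m)%nat with k by lia; rewrite (Nat.add_comm k (S m)), Cpow_add_r.
    replace (/ (INR (fact (S m + k)) / (INR (fact (S m)) * INR (fact k))))%R
      with (INR (fact (S m)) * INR (fact k) / INR (fact (S m + k)))%R
      by (field; repeat split; apply INR_fact_neq_0).
    rewrite RtoC_div, RtoC_mult by apply INR_fact_neq_0.
    field; repeat split; try apply RtoC_fact_neq0; apply Cpow_nz, Hw. }
  exact (is_series_ext _ _ _ Hterm (is_series_Cmult_l _ _ _ Htail)).
Qed.

Lemma mul_lower_gamma_eq_exp_tail (w : C) m : w <> 0 ->
  RtoC (INR (S m)) * Cexp w / w ^ S m * lower_gamma (S m) w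
  = RtoC (INR (fact (S m))) / w ^ S m * (Cexp w - exp_partial w m).
Proof.
  intros Hw; rewrite lower_gamma_closed_form by exact Hw.
  change (fact (S m)) with (S m * fact m)%nat; rewrite mult_INR, RtoC_mult.
  transitivity (RtoC (INR (S m)) * RtoC (INR (fact m)) / w ^ S m
                * (Cexp w - Cexp w * Cexp (- w) * exp_partial w m)).
  - field; apply Cpow_nz, Hw.
  - rewrite Cexp_opp_r; ring.
Qed.

Close Scope C_scope.

Theorem mainTheorem4 (p : nat) (z : C) :
  (1 <= p)%nat ->
  Cexp z <> RtoC 1 ->
  is_series
    (fun n : nat => (RtoC (pBell n p) * Cpow z n / RtoC (INR (Factorial.fact n)))%C)
    (RtoC (INR p) * Cexp (Cexp z - RtoC 1) / Cpow (Cexp z - RtoC 1) p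
       * lower_gamma p (Cexp z - RtoC 1))%C.
Proof.
  intros Hp Hz; destruct p as [|m]; [lia|].
  set (w := (Cexp z - RtoC 1)%C).
  assert (Hw : w <> RtoC 0).
  { intros H; apply Hz; replace (Cexp z) with (w + RtoC 1)%C by (unfold w; ring).
    rewrite H; ring. }
  rewrite mul_lower_gamma_eq_exp_tail by exact Hw.
  unfold is_series; eapply filterlim_ext; [intros N; symmetry; apply sum_n_pBell_switch|].
  apply tannery with
    (a := fun k => (RtoC (/ Binomial.C (k + S m) (S m)) * (Cpow w k / RtoC (INR (fact k))))%C)
    (M := fun k => ((exp (Cmod z) - 1) ^ k / INR (fact k))%R).
  - intros k; exact (is_series_Cmult_l _ _ _ (is_series_stirling2 z k)).
  - intros N k; apply Cmod_weighted_stirling2_partial_sum_le.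
  - exists (exp (exp (Cmod z) - 1)); apply is_series_exp_R.
  - exact (is_series_exp_tail w m Hw).
Qed.
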